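(* Let $a\neq 0$ be a constant. Then there exists an analytic germ $u=u(t)$ at $t=0$ with $u(0)=a$ satisfying the differential equation $$t\,\Big(\frac{du}{dt}\Big)^2+u\,\frac{du}{dt}-\frac12=0 .$$ For any such $u$, define $$f(x,y)=\frac{x^3}{6}+y+x\,u(xy),\qquad g(x,y)=\frac{x^3}{6}+y-x\,u(xy),$$ and let $W_u$ be the planar 4-web whose foliations are the level sets of $x$, $y$, $f$, $g$. Then: (i) the cross-ratio of the four tangent lines to the foliations of $W_u$ is equal to $-1$ at every point (i.e. $\frac{\partial f}{\partial x}\frac{\partial g}{\partial y}+\frac{\partial g}{\partial x}\frac{\partial f}{\partial y}=0$); (ii) no 3-subweb of $W_u$ is hexagonal (the 3-subweb $(x,y,f)$ has nonzero Blaschke curvature at the origin); (iii) $W_u$ has the nontrivial abelian relation $\frac{x^3}{3}+2y-f-g\equiv 0$. Consequently $W_u$ is a Nakai web of rank exactly $1$. *)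

From Stdlib Require Import Reals.
From Coquelicot Require Import Coquelicot.
Open Scope R_scope.

Definition analytic_at (c : R) (phi : R -> R) : Prop :=
  exists r : R, 0 < r /\ exists a : nat -> R,
    forall t, Rabs (t - c) < r -> is_pseries a (t - c) (phi t).

Definition px (F : R -> R -> R) (x y : R) : R := Derive (fun s => F s y) x.
Definition py (F : R -> R -> R) (x y : R) : R := Derive (fun s => F x s) y.

(** Coefficient of dx/\dy in dF /\ dG. *)
Definition wedge (F G : R -> R -> R) (x y : R) : R :=
  px F x y * py G x y - py F x y * px G x y.

(** Blaschke curvature of the planar 3-web defined by the first integrals
    F1, F2, F3 (coefficient of dx/\dy of the curvature 2-form dγ).
    Normalization: ω1 = a1 dF1, ω2 = a2 dF2, ω3 = dF3 with ω1+ω2+ω3 = 0;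
    the connection form γ with dωi = γ /\ ωi is γ = h dF3, where
    da1 /\ dF1 = h a1 dF3 /\ dF1; the curvature is dγ = dh /\ dF3.
    (For the web (x, y, F) this equals ∂x∂y log(F_x / F_y).) *)
Definition bl_a1 (F1 F2 F3 : R -> R -> R) (x y : R) : R :=
  - wedge F3 F2 x y / wedge F1 F2 x y.
Definition bl_h (F1 F2 F3 : R -> R -> R) (x y : R) : R :=
  wedge (bl_a1 F1 F2 F3) F1 x y / (bl_a1 F1 F2 F3 x y * wedge F3 F1 x y).
Definition blaschke_curvature (F1 F2 F3 : R -> R -> R) (x y : R) : R :=
  wedge (bl_h F1 F2 F3) F3 x y.

Definition hexagonal_at0 (F1 F2 F3 : R -> R -> R) : Prop :=
  exists e : R, 0 < e /\ forall x y, Rabs x < e -> Rabs y < e ->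
    blaschke_curvature F1 F2 F3 x y = 0.

Definition abelian_relation (F1 F2 F3 F4 : R -> R -> R)
    (p1 p2 p3 p4 : R -> R) : Prop :=
  analytic_at (F1 0 0) p1 /\ analytic_at (F2 0 0) p2 /\
  analytic_at (F3 0 0) p3 /\ analytic_at (F4 0 0) p4 /\
  exists e : R, 0 < e /\ forall x y, Rabs x < e -> Rabs y < e ->
    p1 (F1 x y) + p2 (F2 x y) + p3 (F3 x y) + p4 (F4 x y) = 0.

Definition locally_const_at (c : R) (phi : R -> R) : Prop :=
  exists e : R, 0 < e /\ forall t, Rabs (t - c) < e -> phi t = phi c.

Definition trivial_relation (F1 F2 F3 F4 : R -> R -> R)
    (p1 p2 p3 p4 : R -> R) : Prop :=
  locally_const_at (F1 0 0) p1 /\ locally_const_at (F2 0 0) p2 /\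
  locally_const_at (F3 0 0) p3 /\ locally_const_at (F4 0 0) p4.

(** Rank of the 4-web = dimension of the space of abelian relations modulo
    the trivial (constant) ones. *)
Definition rank_exactly_one (F1 F2 F3 F4 : R -> R -> R) : Prop :=
  (exists p1 p2 p3 p4, abelian_relation F1 F2 F3 F4 p1 p2 p3 p4 /\
     ~ trivial_relation F1 F2 F3 F4 p1 p2 p3 p4) /\
  (forall p1 p2 p3 p4 q1 q2 q3 q4,
     abelian_relation F1 F2 F3 F4 p1 p2 p3 p4 ->
     abelian_relation F1 F2 F3 F4 q1 q2 q3 q4 ->
     exists l m : R, (l <> 0 \/ m <> 0) /\
       trivial_relation F1 F2 F3 F4
         (fun s => l * p1 s + m * q1 s) (fun s => l * p2 s + m * q2 s)
         (fun s => l * p3 s + m * q3 s) (fun s => l * p4 s + m * q4 s)).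

Definition solves_ode (u : R -> R) : Prop :=
  exists r : R, 0 < r /\ forall t, Rabs t < r ->
    t * (Derive u t) ^ 2 + u t * Derive u t - 1 / 2 = 0.

Definition Xc : R -> R -> R := fun x _ => x.
Definition Yc : R -> R -> R := fun _ y => y.
Definition fW (u : R -> R) : R -> R -> R :=
  fun x y => x ^ 3 / 6 + y + x * u (x * y).
Definition gW (u : R -> R) : R -> R -> R :=
  fun x y => x ^ 3 / 6 + y - x * u (x * y).

From Stdlib Require Import Reals Lra Lia FunctionalExtensionality.
From Coquelicot Require Import Coquelicot.
Open Scope R_scope.

(* The ODE is solved by a power series whose coefficients obey a quadratic
   recursion; the majorant [(16/a^2)^n / ((n+1)(n+2))] gives it a positive
   radius.  For a solution, [f_x g_y + g_x f_y] is [-2 x^2] times the ODE at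
   [t = x y], whence the harmonic cross-ratio.  The Blaschke curvature at the
   origin depends only on the second-order jets of the first integrals along
   the two axes, and for every 3-subweb it equals [1/a^2].  Finally,
   differentiating an abelian relation along the axes shows that it is, up to
   constants, a multiple of [(s^3/3, 2s, -s, -s)], so the rank is one. *)

(* Coquelicot states many equalities at a structure-projected type; [ring]
   and [field] need them at [R]. *)
Ltac R_eq := match goal with |- ?A = ?B => change (@eq R A B) end.

(* Unlike [repeat split], this does not take apart [is_derive], which is itself
   a conjunction. *)
Ltac split_conj := repeat match goal with |- _ /\ _ => split end.

(** * The power series solution of the ODE *)

Definition bound_weight (n : nat) : R := / (INR (S n) * INR (S (S n))).

Lemma INR_S_pos n : 0 < INR (S n).
Proof. apply lt_0_INR; lia. Qed.

Lemma bound_weight_pos n : 0 < bound_weight n.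
Proof.
  unfold bound_weight.
  apply Rinv_0_lt_compat, Rmult_lt_0_compat; apply INR_S_pos.
Qed.

Lemma bound_weight_le1 n : bound_weight n <= 1.
Proof.
  unfold bound_weight. rewrite !S_INR. pose proof (pos_INR n).
  rewrite <- Rinv_1. apply Rinv_le_contravar; nra.
Qed.

Lemma bound_weight_mul_le i j :
  bound_weight i * bound_weight j <=
  4 * bound_weight (i + j + 1) * (bound_weight i + bound_weight j).
Proof.
  unfold bound_weight. rewrite !S_INR, !plus_INR. simpl INR.
  pose proof (pos_INR i) as Hi. pose proof (pos_INR j) as Hj.
  set (I := INR i) in *. set (J := INR j) in *.
  set (A := (I+1)*(I+1+1)). set (B := (J+1)*(J+1+1)).
  set (N := (I+J+1+1)*(I+J+1+1+1)).
  assert (HA : 0 < A) by (unfold A; nra).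
  assert (HB : 0 < B) by (unfold B; nra).
  assert (HN : 0 < N) by (unfold N; nra).
  assert (HNAB : N <= 4 * (A + B)) by (unfold N, A, B; nra).
  apply Rminus_le_0.
  replace (4 * / N * (/ A + / B) - / A * / B) with ((4 * (A + B) - N) / (N * A * B))
    by (field; lra).
  apply Rdiv_le_0_compat; [lra|].
  apply Rmult_lt_0_compat; [apply Rmult_lt_0_compat|]; lra.
Qed.

(* Telescoping: 1/((k+1)(k+2)) = 1/(k+1) - 1/(k+2). *)
Lemma sum_bound_weight n : sum_f_R0 bound_weight n = 1 - / INR (S (S n)).
Proof.
  induction n as [|n IH].
  - unfold bound_weight; simpl sum_f_R0. rewrite !S_INR. simpl INR. field.
  - simpl sum_f_R0 at 1. rewrite IH. unfold bound_weight.
    rewrite !S_INR. pose proof (pos_INR n). field. lra.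
Qed.

Lemma sum_bound_weight_le1 n : sum_f_R0 bound_weight n <= 1.
Proof.
  rewrite sum_bound_weight.
  pose proof (Rinv_0_lt_compat _ (INR_S_pos (S n))). lra.
Qed.

Lemma bound_weight_convolution_le m :
  sum_f_R0 (fun j => bound_weight j * bound_weight (m - j)) m <= 8 * bound_weight (S m).
Proof.
  apply Rle_trans with
    (sum_f_R0 (fun j => 4 * bound_weight (S m) * (bound_weight j + bound_weight (m - j))) m).
  - apply sum_Rle; intros j Hj.
    replace (S m) with (j + (m - j) + 1)%nat by lia. apply bound_weight_mul_le.
  - rewrite (sum_eq _ (fun j => (bound_weight j + bound_weight (m - j)) * (4 * bound_weight (S m))))
      by (intros; ring).
    rewrite <- scal_sum, sum_plus, (sum_f_R0_skip bound_weight).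
    pose proof (sum_bound_weight_le1 m). pose proof (bound_weight_pos (S m)). nra.
Qed.

Lemma CV_disk_le_radius (c : nat -> R) s : CV_disk c s -> Rbar_le s (CV_radius c).
Proof.
  intros H. unfold CV_radius.
  destruct (Lub_Rbar_correct (CV_disk c)) as [Hub _]. exact (Hub s H).
Qed.

Section OdeSolution.

Variable a : R.
Hypothesis a_neq0 : a <> 0.

(* [u = sum_n sol_coef n t^n], [u' = sum_n sol_dcoef n t^n].  Comparing the
   coefficients of [t^(n+1)] in [t u'^2 + u u' = 1/2] gives
   [a d_(n+1) = - sum_(j<=n) d_j d_(n-j) (1 + 1/(j+1))];
   [sol_dcoef_table n] tabulates [d_0 .. d_n] to make this strong recursion
   structural. *)
Fixpoint sol_dcoef_table (n : nat) : nat -> R :=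
  match n with
  | O => fun _ => / (2 * a)
  | S m => fun k =>
      if Nat.leb k m then sol_dcoef_table m k
      else - / a * sum_f_R0 (fun j => sol_dcoef_table m j * sol_dcoef_table m (m - j)
                                       * (1 + / INR (S j))) m
  end.

Definition sol_dcoef (n : nat) : R := sol_dcoef_table n n.

Definition sol_coef (n : nat) : R :=
  match n with O => a | S m => sol_dcoef m / INR (S m) end.

Definition sol : R -> R := PSeries sol_coef.

Lemma sol_dcoef_table_stable n k : (k <= n)%nat -> sol_dcoef_table n k = sol_dcoef k.
Proof.
  induction n as [|n IH]; intros Hk.
  - assert (k = 0)%nat by lia; subst; reflexivity.
  - destruct (Nat.eq_dec k (S n)) as [->|Hne]; [reflexivity|].
    cbn [sol_dcoef_table]. assert (Nat.leb k n = true) as -> by (apply Nat.leb_le; lia).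
    apply IH; lia.
Qed.

Lemma sol_dcoef_0 : sol_dcoef 0 = / (2 * a).
Proof. reflexivity. Qed.

Lemma sol_dcoef_S m : sol_dcoef (S m) =
  - / a * sum_f_R0 (fun j => sol_dcoef j * sol_dcoef (m - j) * (1 + / INR (S j))) m.
Proof.
  unfold sol_dcoef at 1. cbn [sol_dcoef_table].
  assert (Nat.leb (S m) m = false) as -> by (apply Nat.leb_gt; lia).
  f_equal. apply sum_eq; intros i Hi.
  rewrite !sol_dcoef_table_stable by lia; reflexivity.
Qed.

(* The factor [1 + 1/(j+1) <= 2] and [bound_weight_convolution_le] are where
   the constants 16 = 2 * 8 come from. *)
Lemma sol_dcoef_bound n :
  Rabs (sol_dcoef n) <= / Rabs a * (16 / a ^ 2) ^ n * bound_weight n.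
Proof.
  assert (Ha : 0 < Rabs a) by (apply Rabs_pos_lt; auto).
  assert (Ha2 : a ^ 2 = Rabs a ^ 2) by (rewrite <- (pow2_abs a); reflexivity).
  set (M := / Rabs a). set (K := 16 / a ^ 2).
  assert (HM : 0 < M) by (apply Rinv_0_lt_compat; auto).
  assert (HK : 0 < K)
    by (unfold K; rewrite Ha2; apply Rdiv_lt_0_compat; [lra| apply pow_lt; auto]).
  enough (Hall : forall n k, (k <= n)%nat -> Rabs (sol_dcoef k) <= M * K ^ k * bound_weight k)
    by (apply (Hall n); lia).
  intro N; induction N as [|N IH]; intros k Hk.
  - assert (k = 0)%nat by lia; subst. rewrite sol_dcoef_0. unfold bound_weight, M. simpl.
    rewrite Rabs_inv, Rabs_mult, Rabs_right by lra. right. field. lra.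
  - destruct (Nat.eq_dec k (S N)) as [->|]; [|apply IH; lia].
    rewrite sol_dcoef_S, Rabs_mult, Rabs_Ropp, Rabs_inv. fold M.
    apply Rle_trans with
      (M * sum_f_R0 (fun j => 2 * M ^ 2 * K ^ N * (bound_weight j * bound_weight (N - j))) N).
    + apply Rmult_le_compat_l; [lra|].
      eapply Rle_trans; [apply sum_f_R0_triangle|].
      apply sum_Rle; intros j Hj. rewrite !Rabs_mult.
      pose proof (IH j ltac:(lia)) as H1. pose proof (IH (N - j)%nat ltac:(lia)) as H2.
      assert (Hs : Rabs (1 + / INR (S j)) <= 2).
      { assert (0 < / INR (S j) <= 1).
        { split; [apply Rinv_0_lt_compat, INR_S_pos|].
          rewrite <- Rinv_1. apply Rinv_le_contravar; [lra|].
          rewrite S_INR. pose proof (pos_INR j); lra. }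
        rewrite Rabs_right; lra. }
      replace (2 * M ^ 2 * K ^ N * (bound_weight j * bound_weight (N - j))) with
        ((M * K ^ j * bound_weight j) * (M * K ^ (N - j) * bound_weight (N - j)) * 2).
      2:{ replace (K ^ N) with (K ^ j * K ^ (N - j)) by (rewrite <- pow_add; f_equal; lia).
          ring. }
      apply Rmult_le_compat; try apply Rmult_le_pos; try apply Rabs_pos; auto.
      apply Rmult_le_compat; try apply Rabs_pos; auto.
    + rewrite <- (sum_eq (fun j => (bound_weight j * bound_weight (N - j)) * (2 * M ^ 2 * K ^ N)))
        by (intros; ring).
      rewrite <- scal_sum.
      pose proof (bound_weight_convolution_le N). pose proof (bound_weight_pos (S N)).
      assert (0 < 2 * M ^ 2 * K ^ N) by (apply Rmult_lt_0_compat; [nra| apply pow_lt; auto]).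
      apply Rle_trans with (M * (2 * M ^ 2 * K ^ N * (8 * bound_weight (S N)))).
      * apply Rmult_le_compat_l; [lra|]. apply Rmult_le_compat_l; lra.
      * right. simpl pow. unfold K, M. rewrite Ha2. field. lra.
Qed.

Lemma CV_disk_sol_dcoef s : Rabs s < a ^ 2 / 16 -> CV_disk sol_dcoef s.
Proof.
  intros Hs. unfold CV_disk.
  assert (Ha : 0 < Rabs a) by (apply Rabs_pos_lt; auto).
  assert (Ha2 : 0 < a ^ 2) by (apply pow2_gt_0; auto).
  apply (@ex_series_le R_AbsRing R_CompleteNormedModule _
           (fun n => / Rabs a * (16 / a ^ 2 * Rabs s) ^ n)).
  - intros n. change norm with Rabs. rewrite Rabs_Rabsolu, Rabs_mult, <- RPow_abs.
    rewrite Rpow_mult_distr, <- Rmult_assoc.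
    apply Rmult_le_compat_r; [apply pow_le, Rabs_pos|].
    eapply Rle_trans; [apply sol_dcoef_bound|].
    rewrite <- (Rmult_1_r (/ Rabs a * (16 / a ^ 2) ^ n)) at 2.
    apply Rmult_le_compat_l; [|apply bound_weight_le1].
    apply Rmult_le_pos; [left; apply Rinv_0_lt_compat; auto| apply pow_le].
    left; apply Rdiv_lt_0_compat; lra.
  - apply (ex_series_ext (fun n => scal (/ Rabs a) ((16 / a ^ 2 * Rabs s) ^ n))); [reflexivity|].
    apply (@ex_series_scal_l R_AbsRing R_NormedModule), ex_series_geom.
    rewrite Rabs_right.
    + apply Rmult_lt_reg_l with (a ^ 2 / 16); [lra|].
      replace (a ^ 2 / 16 * (16 / a ^ 2 * Rabs s)) with (Rabs s) by (field; lra). lra.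
    + apply Rle_ge, Rmult_le_pos; [left; apply Rdiv_lt_0_compat; lra| apply Rabs_pos].
Qed.

Lemma radius_sol_dcoef t : Rabs t < a ^ 2 / 16 -> Rbar_lt (Rabs t) (CV_radius sol_dcoef).
Proof.
  intros Ht. set (s := (Rabs t + a ^ 2 / 16) / 2).
  assert (Hs : Rbar_le s (CV_radius sol_dcoef)).
  { apply CV_disk_le_radius, CV_disk_sol_dcoef. unfold s. pose proof (Rabs_pos t).
    rewrite Rabs_right; lra. }
  destruct (CV_radius sol_dcoef); simpl in *; auto; unfold s in Hs; lra.
Qed.

Lemma PS_derive_sol_coef : PS_derive sol_coef = sol_dcoef.
Proof.
  apply functional_extensionality; intros n.
  unfold PS_derive, sol_coef. pose proof (INR_S_pos n). field. lra.
Qed.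

Lemma radius_sol_coef t : Rabs t < a ^ 2 / 16 -> Rbar_lt (Rabs t) (CV_radius sol_coef).
Proof.
  intros Ht. rewrite <- CV_radius_derive, PS_derive_sol_coef. apply radius_sol_dcoef; auto.
Qed.

Lemma is_derive_sol t : Rabs t < a ^ 2 / 16 -> is_derive sol t (PSeries sol_dcoef t).
Proof.
  intros Ht. rewrite <- PS_derive_sol_coef. apply is_derive_PSeries, radius_sol_coef; auto.
Qed.

(* The coefficient of [t^(n+1)] in [t u'^2 + u u']. *)
Lemma sol_coef_identity n :
  PS_plus (PS_incr_1 (PS_mult sol_dcoef sol_dcoef)) (PS_mult sol_coef sol_dcoef) (S n) = 0.
Proof.
  unfold PS_plus, PS_incr_1, PS_mult. change plus with Rplus.
  rewrite (decomp_sum _ (S n)) by lia. simpl pred.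
  simpl (sol_coef 0). rewrite Nat.sub_0_r, sol_dcoef_S. unfold sol_coef.
  replace (sum_f_R0 (fun i => sol_dcoef i / INR (S i) * sol_dcoef (S n - S i)) n)
    with (sum_f_R0 (fun i => sol_dcoef i * sol_dcoef (n - i) * / INR (S i)) n)
    by (apply sum_eq; intros; simpl; unfold Rdiv; ring).
  rewrite (sum_eq (fun j => sol_dcoef j * sol_dcoef (n - j) * (1 + / INR (S j)))
     (fun j => sol_dcoef j * sol_dcoef (n - j) + sol_dcoef j * sol_dcoef (n - j) * / INR (S j)))
     by (intros; ring).
  rewrite sum_plus. R_eq. field. auto.
Qed.

Lemma sol_ode t : Rabs t < a ^ 2 / 16 ->
  t * (Derive sol t) ^ 2 + sol t * Derive sol t - 1 / 2 = 0.
Proof.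
  intros Ht. rewrite (is_derive_unique _ _ _ (is_derive_sol t Ht)).
  pose proof (radius_sol_dcoef t Ht) as Rd. pose proof (radius_sol_coef t Ht) as Rc.
  unfold sol. simpl pow. rewrite Rmult_1_r.
  rewrite <- !PSeries_mult by auto.
  rewrite <- PSeries_incr_1, <- PSeries_plus.
  2:{ apply ex_pseries_incr_1, ex_pseries_mult; auto. }
  2:{ apply ex_pseries_mult; auto. }
  rewrite PSeries_decr_1.
  2:{ apply ex_pseries_plus; [apply ex_pseries_incr_1|]; apply ex_pseries_mult; auto. }
  rewrite (PSeries_ext _ (fun _ => 0)) by (intros n; apply sol_coef_identity).
  rewrite PSeries_const_0. unfold PS_plus, PS_incr_1, PS_mult. change plus with Rplus.
  simpl. rewrite sol_dcoef_0. change zero with 0. field. auto.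
Qed.

Lemma ode_solution_exists : exists u : R -> R, analytic_at 0 u /\ u 0 = a /\ solves_ode u.
Proof.
  assert (Hr : 0 < a ^ 2 / 16) by (apply Rdiv_lt_0_compat; [apply pow2_gt_0; auto| lra]).
  exists sol. split; [|split].
  - exists (a ^ 2 / 16). split; auto. exists sol_coef. intros t Ht.
    rewrite Rminus_0_r in *. apply PSeries_correct, CV_radius_inside, radius_sol_coef; auto.
  - apply PSeries_0.
  - exists (a ^ 2 / 16). split; auto. exact sol_ode.
Qed.

End OdeSolution.

Lemma locally_abs_lt t r : Rabs t < r -> locally t (fun s => Rabs s < r).
Proof.
  intros Ht. assert (He : 0 < r - Rabs t) by lra.
  exists (mkposreal _ He). intros s Hs. simpl in Hs.
  change (Rabs (s - t) < r - Rabs t) in Hs.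
  pose proof (Rabs_triang_inv s t). lra.
Qed.

Lemma Derive_ext_abs_lt (f g : R -> R) t r : Rabs t < r ->
  (forall s, Rabs s < r -> f s = g s) -> Derive f t = Derive g t.
Proof.
  intros Ht H. apply Derive_ext_loc.
  apply (filter_imp (fun s => Rabs s < r)); [exact H | apply locally_abs_lt; auto].
Qed.

Lemma is_derive_vanishing (F : R -> R) t r l : Rabs t < r ->
  (forall s, Rabs s < r -> F s = 0) -> is_derive F t l -> l = 0.
Proof.
  intros Ht HF Hd. rewrite <- (is_derive_unique _ _ _ Hd).
  apply is_derive_unique, (is_derive_ext_loc (fun _ => 0)); [|apply (is_derive_const 0 t)].
  apply (filter_imp (fun s => Rabs s < r)); [|apply locally_abs_lt; auto].
  intros s Hs. symmetry. apply HF; auto.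
Qed.

Lemma derive_zero_const (F : R -> R) r : (forall s, Rabs s < r -> is_derive F s 0) ->
  forall s, Rabs s < r -> F s = F 0.
Proof.
  intros HF s Hs.
  destruct (Rtotal_order s 0) as [Hlt|[->|Hgt]]; [| reflexivity |].
  - apply (eq_is_derive F s 0); [|lra].
    intros t Ht. apply HF. apply Rabs_def1; apply Rabs_def2 in Hs; lra.
  - symmetry. apply (eq_is_derive F 0 s); [|lra].
    intros t Ht. apply HF. apply Rabs_def1; apply Rabs_def2 in Hs; lra.
Qed.

Lemma is_derive_Derive_eta (f : R -> R) t l : is_derive f t l -> Derive (fun z => f z) t = l.
Proof. apply is_derive_unique. Qed.

Lemma is_derive_eq (f : R -> R) x l l' : is_derive f x l -> l = l' -> is_derive f x l'.
Proof. intros H <-. exact H. Qed.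

Lemma is_derive_Rconst (k x : R) : is_derive (fun _ => k) x 0.
Proof. apply (is_derive_const k x). Qed.

Lemma is_derive_Rid (x : R) : is_derive (fun s => s) x 1.
Proof. apply (is_derive_id x). Qed.

Lemma is_derive_Rplus (f g : R -> R) x df dg : is_derive f x df -> is_derive g x dg ->
  is_derive (fun s => f s + g s) x (df + dg).
Proof. intros. apply (is_derive_plus f g); auto. Qed.

Lemma is_derive_Rminus (f g : R -> R) x df dg : is_derive f x df -> is_derive g x dg ->
  is_derive (fun s => f s - g s) x (df - dg).
Proof. intros. apply (is_derive_minus f g); auto. Qed.

Lemma is_derive_Ropp (f : R -> R) x df : is_derive f x df ->
  is_derive (fun s => - f s) x (- df).
Proof. intros. apply (is_derive_opp f); auto. Qed.

Lemma is_derive_Rmult (f g : R -> R) x df dg : is_derive f x df -> is_derive g x dg ->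
  is_derive (fun s => f s * g s) x (df * g x + f x * dg).
Proof. intros. apply (is_derive_mult f g); auto. intros; apply Rmult_comm. Qed.

Lemma is_derive_Rscal (f : R -> R) k x df : is_derive f x df ->
  is_derive (fun s => k * f s) x (k * df).
Proof. intros. apply (is_derive_scal f); auto. Qed.

Lemma is_derive_Rcomp (f g : R -> R) x df dg : is_derive f (g x) df -> is_derive g x dg ->
  is_derive (fun s => f (g s)) x (dg * df).
Proof. intros. apply (is_derive_comp f g); auto. Qed.

Lemma Rabs_0_lt d : 0 < d -> Rabs 0 < d.
Proof. rewrite Rabs_R0. auto. Qed.

Lemma abs_mul_lt x y r : r <= 1 -> Rabs x < r -> Rabs y < r -> Rabs (x * y) < r.
Proof.
  intros H1 Hx Hy. rewrite Rabs_mult. pose proof (Rabs_pos x). pose proof (Rabs_pos y). nra.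
Qed.

Definition twice_derivable_on (u u1 u2 : R -> R) (r : R) : Prop :=
  forall t, Rabs t < r -> is_derive u t (u1 t) /\ is_derive u1 t (u2 t).

Lemma twice_derivable_on_derive u u1 u2 r t :
  twice_derivable_on u u1 u2 r -> Rabs t < r -> is_derive u t (u1 t).
Proof. intros H Ht. exact (proj1 (H t Ht)). Qed.

Lemma twice_derivable_on_derive2 u u1 u2 r t :
  twice_derivable_on u u1 u2 r -> Rabs t < r -> is_derive u1 t (u2 t).
Proof. intros H Ht. exact (proj2 (H t Ht)). Qed.

Lemma twice_derivable_on_le u u1 u2 r r' :
  twice_derivable_on u u1 u2 r -> r' <= r -> twice_derivable_on u u1 u2 r'.
Proof. intros H Hr t Ht. apply H. lra. Qed.

Lemma CV_radius_ge_of_pseries (c : nat -> R) s :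
  ex_pseries c s -> Rbar_le (Rabs s) (CV_radius c).
Proof.
  intros H. apply Rbar_not_lt_le. intros Hlt.
  apply (CV_disk_outside c s Hlt).
  apply ex_series_lim_0 in H.
  eapply is_lim_seq_ext; [|apply H]. intros n. simpl.
  change scal with Rmult. change mult with Rmult. rewrite pow_n_pow. ring.
Qed.

Lemma analytic_twice_derivable p : analytic_at 0 p ->
  exists r, 0 < r /\ exists p1 p2 : R -> R, twice_derivable_on p p1 p2 r.
Proof.
  intros [r [Hr [c Hc]]].
  assert (Hp : forall t, Rabs t < r -> p t = PSeries c t).
  { intros t Ht. symmetry. apply is_pseries_unique.
    specialize (Hc t). rewrite Rminus_0_r in Hc. auto. }
  assert (Hrad : forall t, Rabs t < r -> Rbar_lt (Rabs t) (CV_radius c)).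
  { intros t Ht. set (s := (Rabs t + r) / 2). pose proof (Rabs_pos t).
    assert (Hs : Rbar_le (Rabs s) (CV_radius c)).
    { apply CV_radius_ge_of_pseries. exists (p s).
      specialize (Hc s). rewrite Rminus_0_r in Hc. apply Hc.
      unfold s. rewrite Rabs_right; lra. }
    unfold s in Hs. rewrite (Rabs_right ((Rabs t + r)/2)) in Hs by lra.
    destruct (CV_radius c); simpl in *; auto; lra. }
  exists r; split; auto.
  exists (PSeries (PS_derive c)), (PSeries (PS_derive (PS_derive c))).
  intros t Ht; split.
  - apply (is_derive_ext_loc (PSeries c)); [|apply is_derive_PSeries; auto].
    apply (filter_imp (fun s => Rabs s < r)); [|apply locally_abs_lt; auto].
    intros s Hs. symmetry. apply Hp; auto.
  - apply is_derive_PSeries. rewrite CV_radius_derive. auto.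
Qed.

Lemma bounded_near_0 u u1 r : (forall t, Rabs t < r -> is_derive u t (u1 t)) -> 0 < r ->
  exists d, 0 < d /\ forall t, Rabs t < d -> Rabs (u t) <= Rabs (u 0) + 1.
Proof.
  intros H Hr.
  assert (Hc : continuous u 0).
  { apply ex_derive_continuous. exists (u1 0). apply H. rewrite Rabs_R0; auto. }
  assert (Hone : 0 < 1) by lra.
  destruct (Hc (ball (u 0) (mkposreal 1 Hone)) (locally_ball _ _)) as [eps Heps].
  exists eps. split; [apply cond_pos|].
  intros t Ht. assert (Hb : ball 0 eps t) by (change (Rabs (t - 0) < eps); rewrite Rminus_0_r; auto).
  specialize (Heps t Hb). change (Rabs (u t - u 0) < 1) in Heps.
  pose proof (Rabs_triang_inv (u t) (u 0)). lra.
Qed.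

Lemma analytic_at_ext c p q : (forall t, p t = q t) -> analytic_at c p -> analytic_at c q.
Proof.
  intros H [r [Hr [al Hal]]]. exists r. split; auto. exists al. intros t Ht. rewrite <- H. auto.
Qed.

Lemma sum_n_monomial (c t : R) (k n : nat) :
  sum_n (fun m => scal (pow_n t m) (if Nat.eqb m k then c else 0)) n =
  if Nat.leb k n then c * t ^ k else 0.
Proof.
  induction n as [|n IH].
  - rewrite sum_O. change scal with Rmult.
    replace (pow_n t 0) with (t ^ 0) by (symmetry; apply pow_n_pow).
    destruct k; simpl; ring.
  - rewrite sum_Sn, IH. change plus with Rplus. change scal with Rmult.
    replace (pow_n t (S n)) with (t ^ S n) by (symmetry; apply pow_n_pow).
    destruct (Nat.eqb_spec (S n) k) as [<-|Hne].
    + assert (Nat.leb (S n) n = false) as -> by (apply Nat.leb_gt; lia).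
      rewrite Nat.leb_refl. R_eq; ring.
    + destruct (Nat.leb_spec k n); destruct (Nat.leb_spec k (S n)); try lia; R_eq; ring.
Qed.

Lemma analytic_monomial (c : R) (k : nat) : analytic_at 0 (fun s => c * s ^ k).
Proof.
  exists 1. split; [lra|]. exists (fun m => if Nat.eqb m k then c else 0).
  intros t _. rewrite Rminus_0_r. unfold is_pseries, is_series.
  apply (filterlim_ext_loc (fun _ => c * t ^ k)); [|apply filterlim_const].
  exists k. intros n Hn. rewrite sum_n_monomial.
  assert (Nat.leb k n = true) as -> by (apply Nat.leb_le; lia). reflexivity.
Qed.

(** * The first integrals of the web and their partial derivatives *)

Record jet : Type := Jet { jet_x : R; jet_y : R; jet_xx : R; jet_xy : R; jet_yy : R }.

Definition has_jets_on (F : R -> R -> R) (J : R -> R -> jet) (r : R) : Prop :=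
  forall x y, Rabs x < r -> Rabs y < r ->
    px F x y = jet_x (J x y) /\ py F x y = jet_y (J x y) /\
    is_derive (fun s => jet_x (J s y)) x (jet_xx (J x y)) /\
    is_derive (fun s => jet_x (J x s)) y (jet_xy (J x y)) /\
    is_derive (fun s => jet_y (J s y)) x (jet_xy (J x y)) /\
    is_derive (fun s => jet_y (J x s)) y (jet_yy (J x y)).

Definition Xc_jet (x y : R) : jet := Jet 1 0 0 0 0.
Definition Yc_jet (x y : R) : jet := Jet 0 1 0 0 0.

Definition fW_jet (u u1 u2 : R -> R) (x y : R) : jet :=
  Jet (x ^ 2 / 2 + u (x * y) + x * y * u1 (x * y)) (1 + x ^ 2 * u1 (x * y))
      (x + 2 * y * u1 (x * y) + x * y ^ 2 * u2 (x * y))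
      (2 * x * u1 (x * y) + x ^ 2 * y * u2 (x * y)) (x ^ 3 * u2 (x * y)).

Definition gW_jet (u u1 u2 : R -> R) (x y : R) : jet :=
  Jet (x ^ 2 / 2 - u (x * y) - x * y * u1 (x * y)) (1 - x ^ 2 * u1 (x * y))
      (x - 2 * y * u1 (x * y) - x * y ^ 2 * u2 (x * y))
      (- (2 * x * u1 (x * y) + x ^ 2 * y * u2 (x * y))) (- (x ^ 3 * u2 (x * y))).

Lemma has_jets_Xc r : has_jets_on Xc Xc_jet r.
Proof.
  intros x y _ _. unfold px, py, Xc. simpl.
  rewrite Derive_id, Derive_const. split_conj; try reflexivity; apply is_derive_Rconst.
Qed.

Lemma has_jets_Yc r : has_jets_on Yc Yc_jet r.
Proof.
  intros x y _ _. unfold px, py, Yc. simpl.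
  rewrite Derive_id, Derive_const. split_conj; try reflexivity; apply is_derive_Rconst.
Qed.

Lemma fW_jet_x_axis u u1 u2 s :
  fW_jet u u1 u2 s 0 =
  Jet (s ^ 2 / 2 + u 0) (1 + s ^ 2 * u1 0) s (2 * s * u1 0) (s ^ 3 * u2 0).
Proof. unfold fW_jet. rewrite Rmult_0_r. f_equal; field. Qed.

Lemma fW_jet_y_axis u u1 u2 s : fW_jet u u1 u2 0 s = Jet (u 0) 1 (2 * s * u1 0) 0 0.
Proof. unfold fW_jet. rewrite Rmult_0_l. f_equal; field. Qed.

Lemma gW_jet_x_axis u u1 u2 s :
  gW_jet u u1 u2 s 0 =
  Jet (s ^ 2 / 2 - u 0) (1 - s ^ 2 * u1 0) s (- (2 * s * u1 0)) (- (s ^ 3 * u2 0)).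
Proof. unfold gW_jet. rewrite Rmult_0_r. f_equal; field. Qed.

Lemma gW_jet_y_axis u u1 u2 s : gW_jet u u1 u2 0 s = Jet (- u 0) 1 (- (2 * s * u1 0)) 0 0.
Proof. unfold gW_jet. rewrite Rmult_0_l. f_equal; field. Qed.

Lemma fW_y_axis u y : fW u 0 y = y.
Proof. unfold fW. field. Qed.

Lemma gW_y_axis u y : gW u 0 y = y.
Proof. unfold gW. field. Qed.

Lemma fW_x_axis u x : fW u x 0 = x ^ 3 / 6 + u 0 * x.
Proof. unfold fW. rewrite Rmult_0_r. field. Qed.

Lemma gW_x_axis u x : gW u x 0 = x ^ 3 / 6 - u 0 * x.
Proof. unfold gW. rewrite Rmult_0_r. field. Qed.

Section WebDerivatives.

Variables u u1 u2 : R -> R.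
Variable r : R.
Hypothesis u_derivable : twice_derivable_on u u1 u2 r.
Hypothesis r_le1 : r <= 1.

Local Ltac solve_partial :=
  intros x y Hx Hy;
  destruct (u_derivable _ (abs_mul_lt x y r r_le1 Hx Hy)) as [D0 D1];
  unfold fW, gW, fW_jet, gW_jet; simpl; auto_derive;
  [ split_conj;
    first [exists (u1 (x * y)); exact D0 | exists (u2 (x * y)); exact D1 | exact I]
  | rewrite ?(is_derive_Derive_eta _ _ _ D0), ?(is_derive_Derive_eta _ _ _ D1); R_eq; field ].

Lemma is_derive_fW_x : forall x y, Rabs x < r -> Rabs y < r ->
  is_derive (fun s => fW u s y) x (jet_x (fW_jet u u1 u2 x y)).
Proof. solve_partial. Qed.

Lemma is_derive_fW_y : forall x y, Rabs x < r -> Rabs y < r ->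
  is_derive (fun s => fW u x s) y (jet_y (fW_jet u u1 u2 x y)).
Proof. solve_partial. Qed.

Lemma is_derive_gW_x : forall x y, Rabs x < r -> Rabs y < r ->
  is_derive (fun s => gW u s y) x (jet_x (gW_jet u u1 u2 x y)).
Proof. solve_partial. Qed.

Lemma is_derive_gW_y : forall x y, Rabs x < r -> Rabs y < r ->
  is_derive (fun s => gW u x s) y (jet_y (gW_jet u u1 u2 x y)).
Proof. solve_partial. Qed.

Lemma has_jets_fW : has_jets_on (fW u) (fW_jet u u1 u2) r.
Proof.
  intros x y Hx Hy. split; [apply is_derive_unique, is_derive_fW_x; auto|].
  split; [apply is_derive_unique, is_derive_fW_y; auto|].
  split_conj; revert x y Hx Hy; solve_partial.
Qed.

Lemma has_jets_gW : has_jets_on (gW u) (gW_jet u u1 u2) r.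
Proof.
  intros x y Hx Hy. split; [apply is_derive_unique, is_derive_gW_x; auto|].
  split; [apply is_derive_unique, is_derive_gW_y; auto|].
  split_conj; revert x y Hx Hy; solve_partial.
Qed.

Lemma is_derive_comp_fW_x P dP x y : Rabs x < r -> Rabs y < r ->
  is_derive P (fW u x y) dP ->
  is_derive (fun s => P (fW u s y)) x (jet_x (fW_jet u u1 u2 x y) * dP).
Proof. intros. apply (is_derive_Rcomp P (fun s => fW u s y)), is_derive_fW_x; auto. Qed.

Lemma is_derive_comp_fW_y P dP x y : Rabs x < r -> Rabs y < r ->
  is_derive P (fW u x y) dP ->
  is_derive (fun s => P (fW u x s)) y (jet_y (fW_jet u u1 u2 x y) * dP).
Proof. intros. apply (is_derive_Rcomp P (fun s => fW u x s)), is_derive_fW_y; auto. Qed.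

Lemma is_derive_comp_gW_x P dP x y : Rabs x < r -> Rabs y < r ->
  is_derive P (gW u x y) dP ->
  is_derive (fun s => P (gW u s y)) x (jet_x (gW_jet u u1 u2 x y) * dP).
Proof. intros. apply (is_derive_Rcomp P (fun s => gW u s y)), is_derive_gW_x; auto. Qed.

Lemma is_derive_comp_gW_y P dP x y : Rabs x < r -> Rabs y < r ->
  is_derive P (gW u x y) dP ->
  is_derive (fun s => P (gW u x s)) y (jet_y (gW_jet u u1 u2 x y) * dP).
Proof. intros. apply (is_derive_Rcomp P (fun s => gW u x s)), is_derive_gW_y; auto. Qed.

Lemma fW_gW_small B : (forall t, Rabs t < r -> Rabs (u t) <= B) -> 0 <= B -> 0 < r ->
  forall eps, 0 < eps -> exists d, 0 < d /\ d <= eps /\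
   forall x y, Rabs x < d -> Rabs y < d -> Rabs (fW u x y) < eps /\ Rabs (gW u x y) < eps.
Proof.
  intros HB HB0 Hr0 eps Heps.
  set (d := Rmin (eps / (2 + B)) r).
  assert (Hd1 : d <= eps / (2 + B)) by apply Rmin_l.
  assert (Hd2 : d <= r) by apply Rmin_r.
  assert (Hd0 : 0 < d) by (apply Rmin_pos; [apply Rdiv_lt_0_compat|]; lra).
  assert (Hde : d * (2 + B) <= eps).
  { apply (Rmult_le_compat_r (2 + B)) in Hd1; [|lra].
    replace (eps / (2 + B) * (2 + B)) with eps in Hd1 by (field; lra). lra. }
  exists d. split; [auto|split; [nra|]].
  intros x y Hx Hy.
  pose proof (HB _ (abs_mul_lt x y r r_le1 ltac:(lra) ltac:(lra))) as Hu.
  pose proof (Rabs_pos x). pose proof (Rabs_pos y).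
  assert (Hx3 : Rabs (x ^ 3 / 6) <= Rabs x / 6).
  { unfold Rdiv. rewrite Rabs_mult, <- RPow_abs, (Rabs_right (/6)) by lra.
    assert (Rabs x ^ 3 <= Rabs x) by (simpl; nra). lra. }
  assert (Hxu : Rabs (x * u (x * y)) <= Rabs x * B)
    by (rewrite Rabs_mult; apply Rmult_le_compat_l; auto).
  assert (Hsum : Rabs x / 6 + Rabs y + Rabs x * B < eps) by nra.
  unfold fW, gW. split.
  - eapply Rle_lt_trans; [apply Rabs_triang|].
    eapply Rle_lt_trans; [apply Rplus_le_compat_r, Rabs_triang|]. lra.
  - unfold Rminus. eapply Rle_lt_trans; [apply Rabs_triang|].
    eapply Rle_lt_trans; [apply Rplus_le_compat_r, Rabs_triang|]. rewrite Rabs_Ropp. lra.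
Qed.

Lemma fW_gW_harmonic x y : Rabs x < r -> Rabs y < r ->
  x * y * u1 (x * y) ^ 2 + u (x * y) * u1 (x * y) - 1 / 2 = 0 ->
  px (fW u) x y * py (gW u) x y + px (gW u) x y * py (fW u) x y = 0.
Proof.
  intros Hx Hy Hode.
  destruct (has_jets_fW x y Hx Hy) as (-> & -> & _).
  destruct (has_jets_gW x y Hx Hy) as (-> & -> & _).
  simpl. transitivity (-2 * x ^ 2 * (x * y * u1 (x * y) ^ 2 + u (x * y) * u1 (x * y) - 1 / 2)).
  - field.
  - rewrite Hode. ring.
Qed.

End WebDerivatives.

(** * Blaschke curvature from second-order jets *)

Definition jet_wedge (J K : jet) : R := jet_x J * jet_y K - jet_y J * jet_x K.

Definition jet_wedge_dx (J K : jet) : R :=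
  jet_xx J * jet_y K + jet_x J * jet_xy K - (jet_xy J * jet_x K + jet_y J * jet_xx K).

Definition jet_wedge_dy (J K : jet) : R :=
  jet_xy J * jet_y K + jet_x J * jet_yy K - (jet_yy J * jet_x K + jet_y J * jet_xy K).

Definition a1_of_jets (J1 J2 J3 : jet) : R := - jet_wedge J3 J2 / jet_wedge J1 J2.

Definition a1_dx_of_jets (J1 J2 J3 : jet) : R :=
  (- jet_wedge_dx J3 J2 * jet_wedge J1 J2 - - jet_wedge J3 J2 * jet_wedge_dx J1 J2)
  / jet_wedge J1 J2 ^ 2.

Definition a1_dy_of_jets (J1 J2 J3 : jet) : R :=
  (- jet_wedge_dy J3 J2 * jet_wedge J1 J2 - - jet_wedge J3 J2 * jet_wedge_dy J1 J2)
  / jet_wedge J1 J2 ^ 2.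

Definition h_of_jets (J1 J2 J3 : jet) : R :=
  (a1_dx_of_jets J1 J2 J3 * jet_y J1 - a1_dy_of_jets J1 J2 J3 * jet_x J1)
  / (a1_of_jets J1 J2 J3 * jet_wedge J3 J1).

Section JetWedge.

Variables (F G : R -> R -> R) (J K : R -> R -> jet) (r : R).
Hypotheses (F_jets : has_jets_on F J r) (G_jets : has_jets_on G K r).

Lemma wedge_of_jets x y : Rabs x < r -> Rabs y < r -> wedge F G x y = jet_wedge (J x y) (K x y).
Proof.
  intros Hx Hy. destruct (F_jets x y Hx Hy) as (HFx & HFy & _).
  destruct (G_jets x y Hx Hy) as (HGx & HGy & _).
  unfold wedge, jet_wedge. rewrite HFx, HFy, HGx, HGy. reflexivity.
Qed.

Lemma is_derive_jet_wedge_x x y : Rabs x < r -> Rabs y < r ->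
  is_derive (fun s => jet_wedge (J s y) (K s y)) x (jet_wedge_dx (J x y) (K x y)).
Proof.
  intros Hx Hy. destruct (F_jets x y Hx Hy) as (_ & _ & Fxx & _ & Fyx & _).
  destruct (G_jets x y Hx Hy) as (_ & _ & Gxx & _ & Gyx & _).
  unfold jet_wedge, jet_wedge_dx.
  apply is_derive_Rminus; apply is_derive_Rmult; auto.
Qed.

Lemma is_derive_jet_wedge_y x y : Rabs x < r -> Rabs y < r ->
  is_derive (fun s => jet_wedge (J x s) (K x s)) y (jet_wedge_dy (J x y) (K x y)).
Proof.
  intros Hx Hy. destruct (F_jets x y Hx Hy) as (_ & _ & _ & Fxy & _ & Fyy).
  destruct (G_jets x y Hx Hy) as (_ & _ & _ & Gxy & _ & Gyy).
  unfold jet_wedge, jet_wedge_dy.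
  apply is_derive_Rminus; apply is_derive_Rmult; auto.
Qed.

End JetWedge.

Section BlaschkeJets.

Variables (F1 F2 F3 : R -> R -> R) (J1 J2 J3 : R -> R -> jet) (r : R).
Hypotheses (F1_jets : has_jets_on F1 J1 r) (F2_jets : has_jets_on F2 J2 r)
  (F3_jets : has_jets_on F3 J3 r).

Lemma bl_a1_of_jets x y : Rabs x < r -> Rabs y < r ->
  bl_a1 F1 F2 F3 x y = a1_of_jets (J1 x y) (J2 x y) (J3 x y).
Proof.
  intros Hx Hy. unfold bl_a1, a1_of_jets.
  rewrite (wedge_of_jets F3 F2 J3 J2 r), (wedge_of_jets F1 F2 J1 J2 r); auto.
Qed.

Lemma px_bl_a1_of_jets x y : Rabs x < r -> Rabs y < r ->
  jet_wedge (J1 x y) (J2 x y) <> 0 ->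
  px (bl_a1 F1 F2 F3) x y = a1_dx_of_jets (J1 x y) (J2 x y) (J3 x y).
Proof.
  intros Hx Hy HD. unfold px.
  rewrite (Derive_ext_abs_lt _ (fun s => a1_of_jets (J1 s y) (J2 s y) (J3 s y)) x r Hx)
    by (intros s Hs; apply bl_a1_of_jets; auto).
  apply is_derive_unique. unfold a1_of_jets, a1_dx_of_jets.
  apply (is_derive_div (fun s => - jet_wedge (J3 s y) (J2 s y))
                        (fun s => jet_wedge (J1 s y) (J2 s y))); auto.
  - apply is_derive_Ropp, (is_derive_jet_wedge_x F3 F2 J3 J2 r); auto.
  - apply (is_derive_jet_wedge_x F1 F2 J1 J2 r); auto.
Qed.

Lemma py_bl_a1_of_jets x y : Rabs x < r -> Rabs y < r ->
  jet_wedge (J1 x y) (J2 x y) <> 0 ->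
  py (bl_a1 F1 F2 F3) x y = a1_dy_of_jets (J1 x y) (J2 x y) (J3 x y).
Proof.
  intros Hx Hy HD. unfold py.
  rewrite (Derive_ext_abs_lt _ (fun s => a1_of_jets (J1 x s) (J2 x s) (J3 x s)) y r Hy)
    by (intros s Hs; apply bl_a1_of_jets; auto).
  apply is_derive_unique. unfold a1_of_jets, a1_dy_of_jets.
  apply (is_derive_div (fun s => - jet_wedge (J3 x s) (J2 x s))
                        (fun s => jet_wedge (J1 x s) (J2 x s))); auto.
  - apply is_derive_Ropp, (is_derive_jet_wedge_y F3 F2 J3 J2 r); auto.
  - apply (is_derive_jet_wedge_y F1 F2 J1 J2 r); auto.
Qed.

Lemma bl_h_of_jets x y : Rabs x < r -> Rabs y < r ->
  jet_wedge (J1 x y) (J2 x y) <> 0 ->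
  bl_h F1 F2 F3 x y = h_of_jets (J1 x y) (J2 x y) (J3 x y).
Proof.
  intros Hx Hy HD. unfold bl_h, h_of_jets. unfold wedge at 1.
  rewrite px_bl_a1_of_jets, py_bl_a1_of_jets, bl_a1_of_jets,
    (wedge_of_jets F3 F1 J3 J1 r) by auto.
  destruct (F1_jets x y Hx Hy) as (-> & -> & _). reflexivity.
Qed.

(* The curvature [d(h dF3)] at the origin only involves [h] along the axes. *)
Lemma blaschke_curvature_of_jets (X1 X2 X3 Y1 Y2 Y3 : R -> jet) : 0 < r ->
  (forall s, J1 s 0 = X1 s /\ J2 s 0 = X2 s /\ J3 s 0 = X3 s) ->
  (forall s, J1 0 s = Y1 s /\ J2 0 s = Y2 s /\ J3 0 s = Y3 s) ->
  (forall s, Rabs s < r -> jet_wedge (X1 s) (X2 s) <> 0) ->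
  (forall s, Rabs s < r -> jet_wedge (Y1 s) (Y2 s) <> 0) ->
  blaschke_curvature F1 F2 F3 0 0 =
  Derive (fun s => h_of_jets (X1 s) (X2 s) (X3 s)) 0 * jet_y (X3 0) -
  Derive (fun s => h_of_jets (Y1 s) (Y2 s) (Y3 s)) 0 * jet_x (Y3 0).
Proof.
  intros Hr HX HY Hx_axis Hy_axis.
  assert (H0 : Rabs 0 < r) by (rewrite Rabs_R0; auto).
  unfold blaschke_curvature, wedge, px at 1, py at 2.
  destruct (F3_jets 0 0 H0 H0) as (-> & -> & _).
  destruct (HX 0) as (_ & _ & ->).
  rewrite (Derive_ext_abs_lt (fun s => bl_h F1 F2 F3 s 0)
             (fun s => h_of_jets (X1 s) (X2 s) (X3 s)) 0 r H0).
  2:{ intros s Hs. pose proof (HX s) as (E1 & E2 & E3).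
      rewrite <- E1, <- E2, <- E3. apply bl_h_of_jets; auto. rewrite E1, E2; auto. }
  rewrite (Derive_ext_abs_lt (fun s => bl_h F1 F2 F3 0 s)
             (fun s => h_of_jets (Y1 s) (Y2 s) (Y3 s)) 0 r H0).
  2:{ intros s Hs. pose proof (HY s) as (E1 & E2 & E3).
      rewrite <- E1, <- E2, <- E3. apply bl_h_of_jets; auto. rewrite E1, E2; auto. }
  destruct (HY 0) as (_ & _ & <-). destruct (HX 0) as (_ & _ & ->). reflexivity.
Qed.

End BlaschkeJets.

Ltac nonzero_factors Ha :=
  lazymatch goal with
  | |- _ * _ <> 0 => apply Rmult_integral_contrapositive_currified; nonzero_factors Ha
  | |- _ / _ <> 0 => unfold Rdiv; nonzero_factors Ha
  | |- / _ <> 0 => apply Rinv_neq_0_compat; nonzero_factors Ha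
  | |- - _ <> 0 => apply Ropp_neq_0_compat; nonzero_factors Ha
  | |- _ ^ _ <> 0 => apply pow_nonzero; nonzero_factors Ha
  | |- _ => first [exact Ha | lra]
  end.

(* Proves [e <> 0] for a rational expression [e] that normalises to a
   monomial in [a], given [Ha : a <> 0]. *)
Ltac nonzero Ha :=
  let H := fresh in intro H; field_simplify in H; try exact Ha;
  revert H; match goal with |- ?x = 0 -> False => change (x <> 0) end;
  nonzero_factors Ha.

Ltac derive_at_0 Ha :=
  match goal with |- context [Derive ?f 0] =>
    erewrite (is_derive_unique f 0);
    [| auto_derive; [split_conj; try exact I; nonzero Ha | reflexivity]]
  end.

Section WebCurvature.

Variables (u u1 u2 : R -> R) (r a : R).
Hypotheses (u_derivable : twice_derivable_on u u1 u2 r) (r_pos : 0 < r) (r_le1 : r <= 1)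
  (r_le_a : r <= Rabs a) (a_neq0 : a <> 0) (u_0 : u 0 = a) (u1_0 : u1 0 = / (2 * a)).

Lemma x_axis_nondegenerate s : Rabs s < r -> 0 < 1 + s ^ 2 * / (2 * a) /\ s ^ 2 / 2 + a <> 0.
Proof.
  intros Hs.
  assert (Hpa : 0 < Rabs a) by (apply Rabs_pos_lt; auto).
  assert (Hs2 : s ^ 2 < Rabs a) by (rewrite <- (pow2_abs s); pose proof (Rabs_pos s); nra).
  split.
  - assert (Habs : Rabs (s ^ 2 * / (2 * a)) < 1 / 2).
    { rewrite Rabs_mult, Rabs_right by (apply Rle_ge, pow2_ge_0).
      rewrite Rabs_inv, Rabs_mult, (Rabs_right 2) by lra.
      apply Rmult_lt_reg_r with (2 * Rabs a); [lra|].
      rewrite Rmult_assoc, Rinv_l by lra. lra. }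
    apply Rabs_def2 in Habs. lra.
  - intros H. assert (Ha : a = - (s ^ 2 / 2)) by lra.
    rewrite Ha, Rabs_Ropp, Rabs_right in Hs2 by (apply Rle_ge; pose proof (pow2_ge_0 s); lra).
    pose proof (pow2_ge_0 s). lra.
Qed.

Ltac curvature_at_0 J1 J2 J3 :=
  erewrite (blaschke_curvature_of_jets _ _ _ J1 J2 J3 r) by
    first
    [ apply has_jets_Xc | apply has_jets_Yc
    | apply (has_jets_fW u u1 u2 r); auto | apply (has_jets_gW u u1 u2 r); auto
    | exact r_pos
    | intros s; split_conj;
      first [ apply fW_jet_x_axis | apply gW_jet_x_axis | apply fW_jet_y_axis
            | apply gW_jet_y_axis | reflexivity ]
    | intros s Hs; rewrite ?u_0, ?u1_0; unfold Xc_jet, Yc_jet, jet_wedge; cbn; intros H;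
      destruct (x_axis_nondegenerate s Hs) as [Hpos Hnz];
      first [lra | apply Hnz; lra | apply a_neq0; lra] ];
  rewrite u_0, u1_0;
  unfold Xc_jet, Yc_jet, h_of_jets, a1_of_jets, a1_dx_of_jets, a1_dy_of_jets,
    jet_wedge, jet_wedge_dx, jet_wedge_dy;
  cbn [jet_x jet_y jet_xx jet_xy jet_yy];
  derive_at_0 a_neq0; derive_at_0 a_neq0; field; split_conj; nonzero a_neq0.

Lemma curvature_X_Y_fW : blaschke_curvature Xc Yc (fW u) 0 0 = / a ^ 2.
Proof. curvature_at_0 Xc_jet Yc_jet (fW_jet u u1 u2). Qed.

Lemma curvature_X_Y_gW : blaschke_curvature Xc Yc (gW u) 0 0 = / a ^ 2.
Proof. curvature_at_0 Xc_jet Yc_jet (gW_jet u u1 u2). Qed.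

Lemma curvature_X_fW_gW : blaschke_curvature Xc (fW u) (gW u) 0 0 = / a ^ 2.
Proof. curvature_at_0 Xc_jet (fW_jet u u1 u2) (gW_jet u u1 u2). Qed.

Lemma curvature_Y_fW_gW : blaschke_curvature Yc (fW u) (gW u) 0 0 = / a ^ 2.
Proof. curvature_at_0 Yc_jet (fW_jet u u1 u2) (gW_jet u u1 u2). Qed.

End WebCurvature.

(** * Abelian relations *)

Lemma cubic_sextic_vanish alpha beta d : 0 < d ->
  (forall x, Rabs x < d -> alpha * x ^ 3 + beta * x ^ 6 = 0) -> alpha = 0 /\ beta = 0.
Proof.
  intros Hd H.
  pose proof (H (d / 2) ltac:(rewrite Rabs_right; lra)) as E1.
  pose proof (H (d / 4) ltac:(rewrite Rabs_right; lra)) as E2.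
  set (X := (d / 2) ^ 3) in *.
  assert (HX : X <> 0) by (apply pow_nonzero; lra).
  replace ((d / 4) ^ 3) with (X / 8) in E2 by (unfold X; field).
  replace ((d / 4) ^ 6) with (X ^ 2 / 64) in E2 by (unfold X; field).
  replace ((d / 2) ^ 6) with (X ^ 2) in E1 by (unfold X; ring).
  assert (Hb : beta * X ^ 2 = 0) by lra.
  assert (beta = 0) as -> by
    (apply (Rmult_eq_reg_r (X ^ 2)); [lra | apply pow_nonzero; auto]).
  split; [|reflexivity]. apply (Rmult_eq_reg_r X); auto. lra.
Qed.

Section AbelianRelationShape.

Variables (u u1 u2 : R -> R) (r a : R).
Hypotheses (u_derivable : twice_derivable_on u u1 u2 r) (r_le1 : r <= 1)
  (a_neq0 : a <> 0) (u_0 : u 0 = a) (u1_0 : u1 0 = / (2 * a)).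

Variables (p1 p2 p3 p4 q1 q2 q3 q4 w1 w2 : R -> R) (d1 d2 d3 : R).
Hypotheses (d3_pos : 0 < d3) (d3_le_d2 : d3 <= d2) (d2_le_d1 : d2 <= d1) (d1_le_r : d1 <= r).
Hypotheses (p1_derivable : twice_derivable_on p1 q1 w1 d1)
  (p2_derivable : twice_derivable_on p2 q2 w2 d1)
  (p3_derivable : forall s, Rabs s < d1 -> is_derive p3 s (q3 s))
  (p4_derivable : forall s, Rabs s < d1 -> is_derive p4 s (q4 s)).
Hypothesis relation : forall x y, Rabs x < d1 -> Rabs y < d1 ->
  p1 x + p2 y + p3 (fW u x y) + p4 (gW u x y) = 0.
(* Each elimination step below holds on a smaller box, which [fW] and [gW] map
   into the interval where the previous step holds. *)
Hypotheses
  (fW_gW_d2 : forall x y, Rabs x < d2 -> Rabs y < d2 ->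
     Rabs (fW u x y) < d1 /\ Rabs (gW u x y) < d1)
  (fW_gW_d3 : forall x y, Rabs x < d3 -> Rabs y < d3 ->
     Rabs (fW u x y) < d2 /\ Rabs (gW u x y) < d2).

Let c := - q1 0 / a.

Lemma relation_on_y_axis s : Rabs s < d1 -> p2 s + p3 s + p4 s = - p1 0.
Proof.
  intros Hs. pose proof (relation 0 s (Rabs_0_lt d1 ltac:(lra)) Hs) as H.
  rewrite fW_y_axis, gW_y_axis in H. lra.
Qed.

Lemma q3_sub_q4 y : Rabs y < d1 -> q3 y - q4 y = c.
Proof.
  intros Hy. assert (H0 : Rabs 0 < d1) by (apply Rabs_0_lt; lra).
  assert (Hd : is_derive (fun x => p1 x + p2 y + p3 (fW u x y) + p4 (gW u x y)) 0
    (q1 0 + 0 + jet_x (fW_jet u u1 u2 0 y) * q3 (fW u 0 y)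
              + jet_x (gW_jet u u1 u2 0 y) * q4 (gW u 0 y))).
  { repeat apply is_derive_Rplus.
    - apply (twice_derivable_on_derive p1 q1 w1 d1); auto.
    - apply is_derive_Rconst.
    - apply (is_derive_comp_fW_x u u1 u2 r); auto; try lra.
      rewrite fW_y_axis. auto.
    - apply (is_derive_comp_gW_x u u1 u2 r); auto; try lra.
      rewrite gW_y_axis. auto. }
  apply (is_derive_vanishing _ 0 d1) in Hd;
    [| exact H0 | intros x Hx; apply relation; auto].
  rewrite fW_jet_y_axis, gW_jet_y_axis, fW_y_axis, gW_y_axis, u_0 in Hd. cbn in Hd.
  unfold c. apply (Rmult_eq_reg_l a); auto. field_simplify; auto. lra.
Qed.

Lemma p3_sub_p4 s : Rabs s < d1 -> p3 s - p4 s = c * s + (p3 0 - p4 0).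
Proof.
  intros Hs.
  assert (Hd : forall t, Rabs t < d1 -> is_derive (fun s => p3 s - p4 s - c * s) t 0).
  { intros t Ht. eapply is_derive_eq.
    - apply is_derive_Rminus; [apply is_derive_Rminus; auto|].
      apply is_derive_Rscal, is_derive_Rid.
    - rewrite q3_sub_q4 by auto. R_eq; ring. }
  pose proof (derive_zero_const _ d1 Hd s Hs) as H. cbv beta in H. lra.
Qed.

(* Eliminating [p3] and [p4] from the relation. *)
Definition reduced_relation x y : R :=
  2 * p1 x + 2 * p2 y - 2 * p1 0 - p2 (fW u x y) - p2 (gW u x y) + c * (fW u x y - gW u x y).

Lemma reduced_relation_0 x y : Rabs x < d2 -> Rabs y < d2 -> reduced_relation x y = 0.
Proof.
  intros Hx Hy. destruct (fW_gW_d2 x y Hx Hy) as [Hf Hg].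
  pose proof (relation x y ltac:(lra) ltac:(lra)).
  pose proof (relation_on_y_axis _ Hf). pose proof (relation_on_y_axis _ Hg).
  pose proof (p3_sub_p4 _ Hf). pose proof (p3_sub_p4 _ Hg).
  unfold reduced_relation. lra.
Qed.

Lemma reduced_relation_dx x y : Rabs x < d2 -> Rabs y < d2 ->
  2 * q1 x - jet_x (fW_jet u u1 u2 x y) * q2 (fW u x y)
  - jet_x (gW_jet u u1 u2 x y) * q2 (gW u x y)
  + c * (jet_x (fW_jet u u1 u2 x y) - jet_x (gW_jet u u1 u2 x y)) = 0.
Proof.
  intros Hx Hy. destruct (fW_gW_d2 x y Hx Hy) as [Hf Hg].
  eapply (is_derive_vanishing (fun s => reduced_relation s y) x d2); auto.
  - intros t Ht. apply reduced_relation_0; auto.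
  - unfold reduced_relation. eapply is_derive_eq.
    + apply is_derive_Rplus; [apply is_derive_Rminus; [apply is_derive_Rminus;
        [apply is_derive_Rminus; [apply is_derive_Rplus|]|]|]|].
      * apply is_derive_Rscal, (twice_derivable_on_derive p1 q1 w1 d1); auto; lra.
      * apply is_derive_Rconst.
      * apply is_derive_Rconst.
      * apply (is_derive_comp_fW_x u u1 u2 r); auto; try lra.
        apply (twice_derivable_on_derive p2 q2 w2 d1); auto; lra.
      * apply (is_derive_comp_gW_x u u1 u2 r); auto; try lra.
        apply (twice_derivable_on_derive p2 q2 w2 d1); auto; lra.
      * apply is_derive_Rscal, is_derive_Rminus.
        -- apply (is_derive_fW_x u u1 u2 r); auto; lra.
        -- apply (is_derive_gW_x u u1 u2 r); auto; lra.
    + R_eq; ring.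
Qed.

Lemma w2_affine y : Rabs y < d2 -> w2 y = (w1 0 + 2 * (c / (2 * a)) * y) / a ^ 2.
Proof.
  intros Hy. assert (H0 : Rabs 0 < d2) by (apply Rabs_0_lt; lra).
  assert (Ha2 : a ^ 2 <> 0) by (apply pow_nonzero; auto).
  assert (Hd : is_derive (fun x => 2 * q1 x - jet_x (fW_jet u u1 u2 x y) * q2 (fW u x y)
      - jet_x (gW_jet u u1 u2 x y) * q2 (gW u x y)
      + c * (jet_x (fW_jet u u1 u2 x y) - jet_x (gW_jet u u1 u2 x y))) 0
    (2 * w1 0
     - (jet_xx (fW_jet u u1 u2 0 y) * q2 (fW u 0 y)
        + jet_x (fW_jet u u1 u2 0 y) * (jet_x (fW_jet u u1 u2 0 y) * w2 (fW u 0 y)))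
     - (jet_xx (gW_jet u u1 u2 0 y) * q2 (gW u 0 y)
        + jet_x (gW_jet u u1 u2 0 y) * (jet_x (gW_jet u u1 u2 0 y) * w2 (gW u 0 y)))
     + c * (jet_xx (fW_jet u u1 u2 0 y) - jet_xx (gW_jet u u1 u2 0 y)))).
  { assert (Hr0 : Rabs 0 < r) by (apply Rabs_0_lt; lra).
    destruct (has_jets_fW u u1 u2 r u_derivable r_le1 0 y Hr0 ltac:(lra)) as (_ & _ & Fxx & _).
    destruct (has_jets_gW u u1 u2 r u_derivable r_le1 0 y Hr0 ltac:(lra)) as (_ & _ & Gxx & _).
    apply is_derive_Rplus; [apply is_derive_Rminus; [apply is_derive_Rminus|]|].
    - apply is_derive_Rscal, (twice_derivable_on_derive2 p1 q1 w1 d1); auto; lra.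
    - apply (is_derive_Rmult (fun s => jet_x (fW_jet u u1 u2 s y)) (fun s => q2 (fW u s y)));
        auto.
      apply (is_derive_comp_fW_x u u1 u2 r); auto; try lra.
      rewrite fW_y_axis. apply (twice_derivable_on_derive2 p2 q2 w2 d1); auto; lra.
    - apply (is_derive_Rmult (fun s => jet_x (gW_jet u u1 u2 s y)) (fun s => q2 (gW u s y)));
        auto.
      apply (is_derive_comp_gW_x u u1 u2 r); auto; try lra.
      rewrite gW_y_axis. apply (twice_derivable_on_derive2 p2 q2 w2 d1); auto; lra.
    - apply is_derive_Rscal, is_derive_Rminus; auto. }
  apply (is_derive_vanishing _ 0 d2) in Hd;
    [| exact H0 | intros t Ht; apply reduced_relation_dx; auto].
  rewrite fW_jet_y_axis, gW_jet_y_axis, fW_y_axis, gW_y_axis, u_0, u1_0 in Hd.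
  cbn in Hd. apply (Rmult_eq_reg_l (a ^ 2)); auto.
  replace (a ^ 2 * ((w1 0 + 2 * (c / (2 * a)) * y) / a ^ 2))
    with (w1 0 + 2 * (c / (2 * a)) * y) by (field; auto).
  unfold Rdiv. simpl in Hd |- *. lra.
Qed.

Lemma q2_quadratic s : Rabs s < d2 -> q2 s = q2 0 + (w1 0 * s + c / (2 * a) * s ^ 2) / a ^ 2.
Proof.
  intros Hs. assert (Ha2 : a ^ 2 <> 0) by (apply pow_nonzero; auto).
  assert (Hd : forall t, Rabs t < d2 ->
    is_derive (fun s => q2 s - (w1 0 * s + c / (2 * a) * s ^ 2) / a ^ 2) t 0).
  { intros t Ht. eapply is_derive_eq.
    - apply is_derive_Rminus; [apply (twice_derivable_on_derive2 p2 q2 w2 d1); auto; lra|].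
      auto_derive; [auto | reflexivity].
    - rewrite w2_affine by auto. R_eq. field. auto. }
  pose proof (derive_zero_const _ d2 Hd s Hs) as H. cbv beta in H.
  replace ((w1 0 * 0 + c / (2 * a) * 0 ^ 2) / a ^ 2) with 0 in H by (field; auto). lra.
Qed.

(* Differentiating the reduced relation in [y] along the [x]-axis and using
   the quadratic form of [q2] leaves a polynomial identity in [x]. *)
Lemma reduced_relation_dy_x_axis x : Rabs x < d3 ->
  - (4 * w1 0 / (3 * a ^ 2)) * x ^ 3 + - (7 * c / (36 * a ^ 3)) * x ^ 6 = 0.
Proof.
  intros Hx. assert (H0 : Rabs 0 < d3) by (apply Rabs_0_lt; auto).
  destruct (fW_gW_d3 x 0 Hx H0) as [Hf Hg].
  assert (Hd : is_derive (fun y => reduced_relation x y) 0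
    (2 * q2 0 - jet_y (fW_jet u u1 u2 x 0) * q2 (fW u x 0)
     - jet_y (gW_jet u u1 u2 x 0) * q2 (gW u x 0)
     + c * (jet_y (fW_jet u u1 u2 x 0) - jet_y (gW_jet u u1 u2 x 0)))).
  { unfold reduced_relation. eapply is_derive_eq.
    - apply is_derive_Rplus; [apply is_derive_Rminus; [apply is_derive_Rminus;
        [apply is_derive_Rminus; [apply is_derive_Rplus|]|]|]|].
      + apply is_derive_Rconst.
      + apply is_derive_Rscal, (twice_derivable_on_derive p2 q2 w2 d1); auto; lra.
      + apply is_derive_Rconst.
      + apply (is_derive_comp_fW_y u u1 u2 r); auto; try lra.
        apply (twice_derivable_on_derive p2 q2 w2 d1); auto; lra.
      + apply (is_derive_comp_gW_y u u1 u2 r); auto; try lra.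
        apply (twice_derivable_on_derive p2 q2 w2 d1); auto; lra.
      + apply is_derive_Rscal, is_derive_Rminus.
        * apply (is_derive_fW_y u u1 u2 r); auto; lra.
        * apply (is_derive_gW_y u u1 u2 r); auto; lra.
    - R_eq; ring. }
  apply (is_derive_vanishing _ 0 d2) in Hd;
    [| lra | intros t Ht; apply reduced_relation_0; lra].
  rewrite (q2_quadratic _ Hf), (q2_quadratic _ Hg) in Hd.
  rewrite fW_jet_x_axis, gW_jet_x_axis, fW_x_axis, gW_x_axis, u_0, u1_0 in Hd.
  cbn in Hd. match type of Hd with ?L = _ => transitivity L; [| exact Hd] end.
  R_eq; field. auto.
Qed.

Lemma c_w1_vanish : c = 0 /\ w1 0 = 0.
Proof.
  destruct (cubic_sextic_vanish _ _ d3 d3_pos reduced_relation_dy_x_axis) as [H1 H2].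
  assert (Ha2 : a ^ 2 <> 0) by (apply pow_nonzero; auto).
  assert (Ha3 : a ^ 3 <> 0) by (apply pow_nonzero; auto).
  split.
  - replace c with (- (7 * c / (36 * a ^ 3)) * (- 36 * a ^ 3 / 7)) by (field; auto).
    rewrite H2. ring.
  - replace (w1 0) with (- (4 * w1 0 / (3 * a ^ 2)) * (- 3 * a ^ 2 / 4)) by (field; auto).
    rewrite H1. ring.
Qed.

Lemma relation_shape : exists beta, forall s, Rabs s < d3 ->
  p1 s = p1 0 + beta * (s ^ 3 / 3) /\ p2 s = p2 0 + beta * (2 * s) /\
  p3 s = p3 0 + beta * (- s) /\ p4 s = p4 0 + beta * (- s).
Proof.
  destruct c_w1_vanish as [Hc Hw].
  assert (Hp2 : forall s, Rabs s < d2 -> p2 s = p2 0 + q2 0 * s).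
  { intros s Hs.
    assert (Hd : forall t, Rabs t < d2 -> is_derive (fun s => p2 s - q2 0 * s) t 0).
    { intros t Ht. eapply is_derive_eq.
      - apply is_derive_Rminus; [apply (twice_derivable_on_derive p2 q2 w2 d1); auto; lra|].
        apply is_derive_Rscal, is_derive_Rid.
      - rewrite (q2_quadratic t Ht), Hc, Hw. R_eq; field. auto. }
    pose proof (derive_zero_const _ d2 Hd s Hs) as H. cbv beta in H. lra. }
  exists (q2 0 / 2). intros s Hs.
  assert (H0 : Rabs 0 < d3) by (apply Rabs_0_lt; auto).
  destruct (fW_gW_d3 s 0 Hs H0) as [Hf Hg].
  pose proof (reduced_relation_0 s 0 ltac:(lra) ltac:(lra)) as Hred.
  unfold reduced_relation in Hred.
  rewrite (Hp2 _ Hf), (Hp2 _ Hg), (Hp2 0 ltac:(lra)), Hc, fW_x_axis, gW_x_axis in Hred.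
  pose proof (relation_on_y_axis s ltac:(lra)). pose proof (relation_on_y_axis 0 ltac:(lra)).
  pose proof (p3_sub_p4 s ltac:(lra)). rewrite Hc in *.
  pose proof (Hp2 s ltac:(lra)).
  split_conj; lra.
Qed.

End AbelianRelationShape.

Lemma not_hexagonal_of_curvature F1 F2 F3 :
  blaschke_curvature F1 F2 F3 0 0 <> 0 -> ~ hexagonal_at0 F1 F2 F3.
Proof. intros H [e [He Hh]]. apply H, Hh; rewrite Rabs_R0; auto. Qed.

Lemma explicit_abelian_relation u : abelian_relation Xc Yc (fW u) (gW u)
  (fun s => s ^ 3 / 3) (fun s => 2 * s) (fun s => - s) (fun s => - s).
Proof.
  unfold abelian_relation. rewrite fW_y_axis, gW_y_axis. unfold Xc, Yc.
  split_conj.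
  - apply (analytic_at_ext _ (fun s => / 3 * s ^ 3)); [intros; field | apply analytic_monomial].
  - apply (analytic_at_ext _ (fun s => 2 * s ^ 1)); [intros; ring | apply analytic_monomial].
  - apply (analytic_at_ext _ (fun s => -1 * s ^ 1)); [intros; ring | apply analytic_monomial].
  - apply (analytic_at_ext _ (fun s => -1 * s ^ 1)); [intros; ring | apply analytic_monomial].
  - exists 1. split; [lra|]. intros x y _ _. unfold fW, gW. field.
Qed.

Lemma explicit_relation_nontrivial u : ~ trivial_relation Xc Yc (fW u) (gW u)
  (fun s => s ^ 3 / 3) (fun s => 2 * s) (fun s => - s) (fun s => - s).
Proof.
  intros (_ & (e & He & H) & _). unfold Yc in H.
  specialize (H (e / 2) ltac:(rewrite Rminus_0_r, Rabs_right; lra)). lra.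
Qed.

Ltac Rmin_le :=
  first [ apply Rle_refl
        | eapply Rle_trans; [apply Rmin_l | Rmin_le]
        | eapply Rle_trans; [apply Rmin_r | Rmin_le] ].

Section AbelianRelations.

Variables (u u1 u2 : R -> R) (r a : R).
Hypotheses (u_derivable : twice_derivable_on u u1 u2 r) (r_pos : 0 < r) (r_le1 : r <= 1)
  (a_neq0 : a <> 0) (u_0 : u 0 = a) (u1_0 : u1 0 = / (2 * a))
  (u_bounded : forall t, Rabs t < r -> Rabs (u t) <= Rabs a + 1).

Lemma abelian_relation_shape p1 p2 p3 p4 :
  abelian_relation Xc Yc (fW u) (gW u) p1 p2 p3 p4 ->
  exists beta e, 0 < e /\ forall s, Rabs s < e ->
    p1 s = p1 0 + beta * (s ^ 3 / 3) /\ p2 s = p2 0 + beta * (2 * s) /\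
    p3 s = p3 0 + beta * (- s) /\ p4 s = p4 0 + beta * (- s).
Proof.
  intros (A1 & A2 & A3 & A4 & e0 & He0 & Hrel).
  rewrite fW_y_axis in A3. rewrite gW_y_axis in A4.
  destruct (analytic_twice_derivable p1 A1) as (r1 & Hr1 & q1 & w1 & D1).
  destruct (analytic_twice_derivable p2 A2) as (r2 & Hr2 & q2 & w2 & D2).
  destruct (analytic_twice_derivable p3 A3) as (r3 & Hr3 & q3 & w3 & D3).
  destruct (analytic_twice_derivable p4 A4) as (r4 & Hr4 & q4 & w4 & D4).
  set (d1 := Rmin (Rmin (Rmin r1 r2) (Rmin r3 r4)) (Rmin e0 r)).
  assert (Hd1 : 0 < d1) by (unfold d1; repeat apply Rmin_pos; auto).
  assert (Hle : d1 <= r1 /\ d1 <= r2 /\ d1 <= r3 /\ d1 <= r4 /\ d1 <= e0 /\ d1 <= r)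
    by (unfold d1; split_conj; Rmin_le).
  destruct Hle as (Le1 & Le2 & Le3 & Le4 & Le0 & Ler).
  assert (HB : 0 <= Rabs a + 1) by (pose proof (Rabs_pos a); lra).
  destruct (fW_gW_small u r r_le1 _ u_bounded HB r_pos d1 Hd1)
    as (d2 & Hd2 & Hd21 & Small2).
  destruct (fW_gW_small u r r_le1 _ u_bounded HB r_pos d2 Hd2)
    as (d3 & Hd3 & Hd32 & Small3).
  destruct (relation_shape u u1 u2 r a u_derivable r_le1 a_neq0 u_0 u1_0
              p1 p2 p3 p4 q1 q2 q3 q4 w1 w2 d1 d2 d3) as [beta Hbeta]; auto.
  - apply (twice_derivable_on_le _ _ _ r1); auto.
  - apply (twice_derivable_on_le _ _ _ r2); auto.
  - intros s Hs. apply (twice_derivable_on_derive p3 q3 w3 r3); auto; lra.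
  - intros s Hs. apply (twice_derivable_on_derive p4 q4 w4 r4); auto; lra.
  - intros x y Hx Hy. apply Hrel; lra.
  - exists beta, d3. auto.
Qed.

Lemma abelian_relations_dependent p1 p2 p3 p4 q1 q2 q3 q4 :
  abelian_relation Xc Yc (fW u) (gW u) p1 p2 p3 p4 ->
  abelian_relation Xc Yc (fW u) (gW u) q1 q2 q3 q4 ->
  exists l m : R, (l <> 0 \/ m <> 0) /\
    trivial_relation Xc Yc (fW u) (gW u)
      (fun s => l * p1 s + m * q1 s) (fun s => l * p2 s + m * q2 s)
      (fun s => l * p3 s + m * q3 s) (fun s => l * p4 s + m * q4 s).
Proof.
  intros Hp Hq.
  destruct (abelian_relation_shape _ _ _ _ Hp) as (bp & ep & Hep & Sp).
  destruct (abelian_relation_shape _ _ _ _ Hq) as (bq & eq & Heq & Sq).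
  assert (Htriv : forall l m, l * bp + m * bq = 0 ->
    trivial_relation Xc Yc (fW u) (gW u)
      (fun s => l * p1 s + m * q1 s) (fun s => l * p2 s + m * q2 s)
      (fun s => l * p3 s + m * q3 s) (fun s => l * p4 s + m * q4 s)).
  { intros l m Hlm. unfold trivial_relation, Xc, Yc. rewrite fW_y_axis, gW_y_axis.
    split_conj; exists (Rmin ep eq); split; try (apply Rmin_pos; auto);
      intros t Ht; rewrite Rminus_0_r in Ht;
      destruct (Sp t ltac:(pose proof (Rmin_l ep eq); lra)) as (P1 & P2 & P3 & P4);
      destruct (Sq t ltac:(pose proof (Rmin_r ep eq); lra)) as (Q1 & Q2 & Q3 & Q4).
    - rewrite P1, Q1. transitivity (l * p1 0 + m * q1 0 + (l * bp + m * bq) * (t ^ 3 / 3));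
        [ring | rewrite Hlm; ring].
    - rewrite P2, Q2. transitivity (l * p2 0 + m * q2 0 + (l * bp + m * bq) * (2 * t));
        [ring | rewrite Hlm; ring].
    - rewrite P3, Q3. transitivity (l * p3 0 + m * q3 0 + (l * bp + m * bq) * (- t));
        [ring | rewrite Hlm; ring].
    - rewrite P4, Q4. transitivity (l * p4 0 + m * q4 0 + (l * bp + m * bq) * (- t));
        [ring | rewrite Hlm; ring]. }
  destruct (Req_dec bp 0) as [Hbp|Hbp]; [destruct (Req_dec bq 0) as [Hbq|Hbq]|].
  - exists 1, 0. split; [left; lra|]. apply Htriv. rewrite Hbp, Hbq. ring.
  - exists bq, (- bp). split; [left; auto|]. apply Htriv. ring.
  - exists bq, (- bp). split; [right; apply Ropp_neq_0_compat; auto|]. apply Htriv. ring.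
Qed.

End AbelianRelations.

Lemma solution_local_data u a : a <> 0 -> analytic_at 0 u -> u 0 = a -> solves_ode u ->
  exists u1 u2 r, twice_derivable_on u u1 u2 r /\ 0 < r /\ r <= 1 /\ r <= Rabs a /\
    u1 0 = / (2 * a) /\
    (forall t, Rabs t < r -> t * u1 t ^ 2 + u t * u1 t - 1 / 2 = 0) /\
    (forall t, Rabs t < r -> Rabs (u t) <= Rabs a + 1).
Proof.
  intros Ha Hu Hu0 (r2 & Hr2 & Hode).
  destruct (analytic_twice_derivable u Hu) as (r1 & Hr1 & u1 & u2 & D).
  destruct (bounded_near_0 u u1 r1) as (r3 & Hr3 & Hbound); auto.
  { intros t Ht. apply (twice_derivable_on_derive u u1 u2 r1); auto. }
  assert (Hpa : 0 < Rabs a) by (apply Rabs_pos_lt; auto).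
  set (r := Rmin (Rmin r1 r2) (Rmin r3 (Rmin 1 (Rabs a)))).
  assert (Hle : r <= r1 /\ r <= r2 /\ r <= r3 /\ r <= 1 /\ r <= Rabs a)
    by (unfold r; split_conj; Rmin_le).
  destruct Hle as (Le1 & Le2 & Le3 & Le4 & Le5).
  assert (Hode_r : forall t, Rabs t < r -> t * u1 t ^ 2 + u t * u1 t - 1 / 2 = 0).
  { intros t Ht. rewrite <- (is_derive_unique _ _ _ (twice_derivable_on_derive u u1 u2 r1 t D
      ltac:(lra))). apply Hode. lra. }
  exists u1, u2, r. split_conj; auto.
  - apply (twice_derivable_on_le _ _ _ r1); auto.
  - unfold r. repeat apply Rmin_pos; lra.
  - pose proof (Hode_r 0 ltac:(rewrite Rabs_R0; unfold r; repeat apply Rmin_pos; lra)) as H.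
    rewrite Hu0 in H. apply (Rmult_eq_reg_l a); auto. field_simplify; auto. lra.
  - intros t Ht. rewrite <- Hu0. apply Hbound. lra.
Qed.

Theorem mainTheorem5 (a : R) (ha : a <> 0) :
  (exists u : R -> R, analytic_at 0 u /\ u 0 = a /\ solves_ode u) /\
  (forall u : R -> R, analytic_at 0 u -> u 0 = a -> solves_ode u ->
     (exists e : R, 0 < e /\ forall x y, Rabs x < e -> Rabs y < e ->
        px (fW u) x y * py (gW u) x y + px (gW u) x y * py (fW u) x y = 0) /\
     blaschke_curvature Xc Yc (fW u) 0 0 <> 0 /\
     ~ hexagonal_at0 Xc Yc (fW u) /\
     ~ hexagonal_at0 Xc Yc (gW u) /\
     ~ hexagonal_at0 Xc (fW u) (gW u) /\
     ~ hexagonal_at0 Yc (fW u) (gW u) /\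
     abelian_relation Xc Yc (fW u) (gW u)
       (fun s => s ^ 3 / 3) (fun s => 2 * s) (fun s => - s) (fun s => - s) /\
     ~ trivial_relation Xc Yc (fW u) (gW u)
       (fun s => s ^ 3 / 3) (fun s => 2 * s) (fun s => - s) (fun s => - s) /\
     rank_exactly_one Xc Yc (fW u) (gW u)).
Proof.
  split; [exact (ode_solution_exists a ha) |].
  intros u Hu Hu0 Hode.
  destruct (solution_local_data u a ha Hu Hu0 Hode)
    as (u1 & u2 & r & D & Hr & Hr1 & Hra & Hu1 & Hode_r & Hbound).
  assert (Hcurv : / a ^ 2 <> 0) by (apply Rinv_neq_0_compat, pow_nonzero; auto).
  pose proof (curvature_X_Y_fW u u1 u2 r a D Hr Hr1 Hra ha Hu0 Hu1) as C1.
  pose proof (curvature_X_Y_gW u u1 u2 r a D Hr Hr1 Hra ha Hu0 Hu1) as C2.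
  pose proof (curvature_X_fW_gW u u1 u2 r a D Hr Hr1 Hra ha Hu0 Hu1) as C3.
  pose proof (curvature_Y_fW_gW u u1 u2 r a D Hr Hr1 Hra ha Hu0 Hu1) as C4.
  split_conj.
  - exists r. split; auto. intros x y Hx Hy.
    apply (fW_gW_harmonic u u1 u2 r); auto. apply Hode_r, abs_mul_lt; auto.
  - rewrite C1. exact Hcurv.
  - apply not_hexagonal_of_curvature. rewrite C1. exact Hcurv.
  - apply not_hexagonal_of_curvature. rewrite C2. exact Hcurv.
  - apply not_hexagonal_of_curvature. rewrite C3. exact Hcurv.
  - apply not_hexagonal_of_curvature. rewrite C4. exact Hcurv.
  - apply explicit_abelian_relation.
  - apply explicit_relation_nontrivial.
  - split.
    + exists (fun s => s ^ 3 / 3), (fun s => 2 * s), (fun s => - s), (fun s => - s).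
      split; [apply explicit_abelian_relation | apply explicit_relation_nontrivial].
    + intros. apply (abelian_relations_dependent u u1 u2 r a); auto.
Qed.
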